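(* (i) There exists a regular curve in $\mathbb{E}^4$ which admits a generalized Bishop frame of type C but does not admit a generalized Bishop frame of type D. (ii) There exists a regular curve in $\mathbb{E}^4$ which does not admit a generalized Bishop frame of type C.
   Context: A regular curve $\gamma: I\to\mathbb{E}^4$ ($I$ an open interval) is considered with arc-length parametrization; $\mathbb{T}=\gamma'$ is its unit tangent vector. A frame on $\gamma$ is an ordered orthonormal frame $(\mathbb{T},\mathbb{Z}_1,\mathbb{Z}_2,\mathbb{Z}_3)$ of smooth vector fields along $\gamma$ whose first vector is $\mathbb{T}$; it is identified with the smooth map $\mathbb{Z}: I\to O(4)$ whose rows are these vectors. Its coefficient matrix is the $\mathfrak{o}(4)$-valued function $X$ with $\mathbb{Z}'=X\mathbb{Z}$. A frame is of type B, C, D, F respectively if, after possibly permuting $\mathbb{Z}_1,\mathbb{Z}_2,\mathbb{Z}_3$ (keeping $\mathbb{T}$ first), its coefficient matrix has the respective form, for some smooth functions $x_1,x_2,x_3$ (no sign conditions): Type B: $\begin{pmatrix}0&x_1&x_2&x_3\\-x_1&0&0&0\\-x_2&0&0&0\\-x_3&0&0&0\end{pmatrix}$; Type C: $\begin{pmatrix}0&x_1&x_2&0\\-x_1&0&0&x_3\\-x_2&0&0&0\\0&-x_3&0&0\end{pmatrix}$; Type D: $\begin{pmatrix}0&x_1&0&0\\-x_1&0&x_2&x_3\\0&-x_2&0&0\\0&-x_3&0&0\end{pmatrix}$; Type F: $\begin{pmatrix}0&x_1&0&0\\-x_1&0&x_2&0\\0&-x_2&0&x_3\\0&0&-x_3&0\end{pmatrix}$.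 A curve admits a frame of a given type if such a frame exists along it. *)

From Stdlib Require Import Reals Lra.
From Coquelicot Require Import Coquelicot.
Open Scope R_scope.

Definition in_I (a b : Rbar) (t : R) : Prop := Rbar_lt a t /\ Rbar_lt t b.

Definition smooth_on (a b : Rbar) (f : R -> R) : Prop :=
  forall (n : nat) (t : R), in_I a b t -> ex_derive_n f n t.

Definition sum4 (f : nat -> R) : R := f 0%nat + f 1%nat + f 2%nat + f 3%nat.

(* A curve in E^4: gamma k t is the k-th coordinate (k < 4) of gamma(t). *)
Definition curve := nat -> R -> R.

(* Regular curve with arc-length parametrization on (a,b). *)
Definition unit_speed_curve (a b : Rbar) (gamma : curve) : Prop :=
  (forall k, (k < 4)%nat -> smooth_on a b (gamma k)) /\
  (forall t, in_I a b t -> sum4 (fun k => (Derive (gamma k) t) ^ 2) = 1).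

(* A moving frame: Z i k t is the k-th coordinate of the i-th vector
   (i = 0 : T, i = 1,2,3 : Z_1, Z_2, Z_3); i.e. the matrix with these rows. *)
Definition frame_map := nat -> nat -> R -> R.

Definition is_frame (a b : Rbar) (gamma : curve) (Z : frame_map) : Prop :=
  (forall i k, (i < 4)%nat -> (k < 4)%nat -> smooth_on a b (Z i k)) /\
  (forall t, in_I a b t -> forall i j, (i < 4)%nat -> (j < 4)%nat ->
     sum4 (fun k => Z i k t * Z j k t) = if Nat.eqb i j then 1 else 0) /\
  (forall t, in_I a b t -> forall k, (k < 4)%nat -> Z 0%nat k t = Derive (gamma k) t).

Definition matB (x1 x2 x3 : R) (i j : nat) : R :=
  match i, j with
  | O, S O => x1 | O, S (S O) => x2 | O, S (S (S O)) => x3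
  | S O, O => - x1 | S (S O), O => - x2 | S (S (S O)), O => - x3
  | _, _ => 0 end.

Definition matC (x1 x2 x3 : R) (i j : nat) : R :=
  match i, j with
  | O, S O => x1 | O, S (S O) => x2
  | S O, O => - x1 | S (S O), O => - x2
  | S O, S (S (S O)) => x3 | S (S (S O)), S O => - x3
  | _, _ => 0 end.

Definition matD (x1 x2 x3 : R) (i j : nat) : R :=
  match i, j with
  | O, S O => x1 | S O, O => - x1
  | S O, S (S O) => x2 | S (S O), S O => - x2
  | S O, S (S (S O)) => x3 | S (S (S O)), S O => - x3
  | _, _ => 0 end.

Definition matF (x1 x2 x3 : R) (i j : nat) : R :=
  match i, j with
  | O, S O => x1 | S O, O => - x1
  | S O, S (S O) => x2 | S (S O), S O => - x2
  | S (S O), S (S (S O)) => x3 | S (S (S O)), S (S O) => - x3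
  | _, _ => 0 end.

Definition perm123 (p : nat -> nat) : Prop :=
  p 0%nat = 0%nat /\
  (forall i, (1 <= i <= 3)%nat -> (1 <= p i <= 3)%nat) /\
  (forall i j, (i <= 3)%nat -> (j <= 3)%nat -> p i = p j -> i = j).

(* Z has type M: after permuting Z_1, Z_2, Z_3 by p, the coefficient matrix X
   (defined by Z' = X Z) has the pattern M x1 x2 x3 for smooth x1, x2, x3. *)
Definition frame_of_type (M : R -> R -> R -> nat -> nat -> R)
    (a b : Rbar) (Z : frame_map) : Prop :=
  exists p : nat -> nat, perm123 p /\
  exists x1 x2 x3 : R -> R,
    smooth_on a b x1 /\ smooth_on a b x2 /\ smooth_on a b x3 /\
    forall t, in_I a b t -> forall i k, (i < 4)%nat -> (k < 4)%nat ->
      Derive (Z (p i) k) t =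
        sum4 (fun j => M (x1 t) (x2 t) (x3 t) i j * Z (p j) k t).

Definition admits_frame_of_type (M : R -> R -> R -> nat -> nat -> R)
    (a b : Rbar) (gamma : curve) : Prop :=
  exists Z : frame_map, is_frame a b gamma Z /\ frame_of_type M a b Z.

From Stdlib Require Import Reals.
From Coquelicot Require Import Coquelicot.
From Stdlib Require Import Lra Lia FunctionalExtensionality.
Open Scope R_scope.

(* Build the unit tangent T from flat bump angles, so that T turns in one coordinate
   plane (e0, e_m) at a time and rests at e0 when it switches planes. Where T turns in
   (e0, e_m) with nonzero speed, a vector orthogonal to T and T' has no e_m-component;
   by continuity, at a switch from (e0, e_m1) to (e0, e_m2) such a unit vector lies on
   the remaining axis.

   (i) Turning in (e0, e1) for t < 0 and in (e0, e2) for t > 0: rotating e1 and e2 along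
   with T and keeping e3 gives a frame of type C. In a frame of type D, both Z2 and Z3
   are orthogonal to T and T', so at t = 0 both would lie on the e3-axis.

   (ii) In a frame of type C only Z3 is orthogonal to T and T', but Z2' = -x2 T. Turning
   successively in (e0, e1), (e0, e2), (e0, e3), (e0, e1), with switches at t = 0, 1, 2,
   puts Z3 on the e3-, e1- and e2-axis there, so Z2 has no e3-component at 0, no
   e1-component at 1 and no e2-component at 2. These components of Z2 are constant
   where T has none, i.e. on [0, 1] and [1, 2] respectively; hence Z2(1), which is
   also orthogonal to T(1) = e0, vanishes. *)

Fixpoint Cn (n : nat) (f : R -> R) : Prop :=
  match n with
  | O => True
  | S n => (forall t, ex_derive f t) /\ Cn n (Derive f)
  end.

Definition smooth (f : R -> R) : Prop := forall n, Cn n f.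

Lemma Cn_S_intro n f df :
  (forall t, is_derive f t (df t)) -> Cn n df -> Cn (S n) f.
Proof.
  intros Hf Hdf; split; [intros t; exists (df t); apply Hf |].
  replace (Derive f) with df; [exact Hdf |].
  apply functional_extensionality; intros t; symmetry; apply is_derive_unique, Hf.
Qed.

Lemma Cn_S_weaken n f : Cn (S n) f -> Cn n f.
Proof. revert f; induction n as [|n IH]; intros f [Hf Hdf]; [exact I | split; auto]. Qed.

Lemma Cn_const n c : Cn n (fun _ => c).
Proof.
  revert c; induction n as [|n IH]; intros c; [exact I |].
  apply (Cn_S_intro n _ (fun _ => 0)); [intros t; exact (is_derive_const c t) | apply IH].
Qed.

Lemma Cn_id n : Cn n (fun x => x).
Proof.
  destruct n as [|n]; [exact I |].
  apply (Cn_S_intro n _ (fun _ => 1)); [intros t; exact (is_derive_id t) | apply Cn_const].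
Qed.

Lemma Cn_plus n f g : Cn n f -> Cn n g -> Cn n (fun x => f x + g x).
Proof.
  revert f g; induction n as [|n IH]; intros f g Hf Hg; [exact I |].
  destruct Hf as [Df Hf], Hg as [Dg Hg].
  apply (Cn_S_intro n _ (fun x => Derive f x + Derive g x)); [| now apply IH].
  intros t; exact (is_derive_plus f g t _ _ (Derive_correct f t (Df t)) (Derive_correct g t (Dg t))).
Qed.

Lemma Cn_opp n f : Cn n f -> Cn n (fun x => - f x).
Proof.
  revert f; induction n as [|n IH]; intros f Hf; [exact I |].
  destruct Hf as [Df Hf].
  apply (Cn_S_intro n _ (fun x => - Derive f x)); [| now apply IH].
  intros t; exact (is_derive_opp f t _ (Derive_correct f t (Df t))).
Qed.

Lemma Cn_mult n f g : Cn n f -> Cn n g -> Cn n (fun x => f x * g x).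
Proof.
  revert f g; induction n as [|n IH]; intros f g Hf Hg; [exact I |].
  pose proof (Cn_S_weaken n f Hf) as Hf'; pose proof (Cn_S_weaken n g Hg) as Hg'.
  destruct Hf as [Df Hf], Hg as [Dg Hg].
  apply (Cn_S_intro n _ (fun x => Derive f x * g x + f x * Derive g x)).
  - intros t; apply (is_derive_mult f g t); [apply Derive_correct; auto .. |].
    intros; apply Rmult_comm.
  - apply Cn_plus; apply IH; auto.
Qed.

Lemma Cn_cos_sin n : Cn n cos /\ Cn n sin.
Proof.
  induction n as [|n [Hcos Hsin]]; [split; exact I |]; split.
  - apply (Cn_S_intro n _ (fun x => - sin x)); [apply is_derive_cos | now apply Cn_opp].
  - apply (Cn_S_intro n _ cos); [apply is_derive_sin | exact Hcos].
Qed.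

Lemma smooth_const c : smooth (fun _ => c).
Proof. intros n; apply Cn_const. Qed.

Lemma smooth_id : smooth (fun x => x).
Proof. intros n; apply Cn_id. Qed.

Lemma smooth_plus f g : smooth f -> smooth g -> smooth (fun x => f x + g x).
Proof. intros Hf Hg n; apply Cn_plus; auto. Qed.

Lemma smooth_opp f : smooth f -> smooth (fun x => - f x).
Proof. intros Hf n; apply Cn_opp; auto. Qed.

Lemma smooth_mult f g : smooth f -> smooth g -> smooth (fun x => f x * g x).
Proof. intros Hf Hg n; apply Cn_mult; auto. Qed.

Lemma smooth_Derive f : smooth f -> smooth (Derive f).
Proof. intros Hf n; apply (Hf (S n)). Qed.

Lemma smooth_ex_derive f t : smooth f -> ex_derive f t.
Proof. intros Hf; apply (Hf 1%nat). Qed.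

Lemma smooth_comp f u : smooth f -> smooth u -> smooth (fun x => f (u x)).
Proof.
  intros Hf Hu n; revert f Hf; induction n as [|n IH]; intros f Hf; [exact I |].
  apply (Cn_S_intro n _ (fun x => Derive u x * Derive f (u x))).
  - intros t; apply (is_derive_comp f u t); apply Derive_correct; apply smooth_ex_derive; auto.
  - apply Cn_mult; [apply (Hu (S n)) | apply IH, smooth_Derive, Hf].
Qed.

Lemma smooth_cos : smooth cos.
Proof. intros n; apply Cn_cos_sin. Qed.

Lemma smooth_sin : smooth sin.
Proof. intros n; apply Cn_cos_sin. Qed.

Lemma smooth_shift f c : smooth f -> smooth (fun x => f (x + c)).
Proof. intros Hf; apply (smooth_comp f); [exact Hf | apply smooth_plus, smooth_const; apply smooth_id]. Qed.

Lemma Derive_n_S_Derive f n x : Derive_n f (S n) x = Derive_n (Derive f) n x.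
Proof.
  revert x; induction n as [|n IH]; intros x; [reflexivity |].
  apply Derive_ext; intros y; rewrite <- IH; reflexivity.
Qed.

Lemma smooth_smooth_on a b f : smooth f -> smooth_on a b f.
Proof.
  intros Hf n; revert f Hf; induction n as [|n IH]; intros f Hf t Ht; [exact I |].
  destruct n as [|n]; [apply smooth_ex_derive, Hf |].
  apply (ex_derive_ext (Derive_n (Derive f) n)); [intros y; symmetry; apply Derive_n_S_Derive |].
  apply (IH (Derive f) (smooth_Derive f Hf) t Ht).
Qed.

Ltac eta_Derive :=
  repeat match goal with
  | |- context [Derive (fun x => ?f x)] => change (Derive (fun x => f x)) with (Derive f)
  end.

Definition flat (n : nat) (t : R) : R :=
  if Rlt_dec 0 t then exp (- / t) * (/ t) ^ n else 0.

Lemma flat_nonpos n t : t <= 0 -> flat n t = 0.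
Proof. intros Ht; unfold flat; destruct (Rlt_dec 0 t); [lra | reflexivity]. Qed.

Lemma flat_pos n t : 0 < t -> 0 < flat n t.
Proof.
  intros Ht; unfold flat; destruct (Rlt_dec 0 t); [| lra].
  apply Rmult_lt_0_compat; [apply exp_pos | apply pow_lt, Rinv_0_lt_compat, Ht].
Qed.

Lemma flat2_eq t : 0 < t -> flat 2 t = flat 0 t / (t * t).
Proof. intros Ht; unfold flat; destruct (Rlt_dec 0 t); [simpl; field; lra | lra]. Qed.

Lemma exp_mult_INR m y : exp (INR m * y) = exp y ^ m.
Proof.
  induction m as [|m IH]; [simpl; rewrite Rmult_0_l; apply exp_0 |].
  rewrite S_INR, Rmult_plus_distr_r, Rmult_1_l, exp_plus, IH; simpl; ring.
Qed.

(* [exp (1/y) = exp (1/(M y))^M >= (1/(M y))^M] with [M = m + 1]. *)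
Lemma exp_neg_inv_le m y : 0 < y -> exp (- / y) <= (INR (S m) * y) ^ S m.
Proof.
  intros Hy; set (M := INR (S m)).
  assert (HM : 0 < M) by (apply lt_0_INR; lia).
  assert (Hu : 0 < / (M * y)) by (apply Rinv_0_lt_compat; nra).
  assert (Hpow : (/ (M * y)) ^ S m <= exp (/ y)).
  { replace (/ y) with (INR (S m) * / (M * y)) by (fold M; field; lra).
    rewrite exp_mult_INR; apply pow_incr; split; [lra |].
    generalize (exp_ineq1_le (/ (M * y))); lra. }
  rewrite exp_Ropp, <- (Rinv_inv ((M * y) ^ S m)), <- pow_inv.
  apply Rinv_le_contravar; [apply pow_lt, Hu | exact Hpow].
Qed.

Lemma flat_derive_0 n : is_derive (flat n) 0 0.
Proof.
  apply is_derive_Reals; intros eps Heps.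
  set (M := INR (S (S n))).
  assert (HM : 0 < M ^ S (S n)) by (apply pow_lt, lt_0_INR; lia).
  exists (mkposreal _ (Rdiv_lt_0_compat _ _ Heps HM)); intros x Hx0 Hx; simpl in Hx.
  rewrite Rplus_0_l, (flat_nonpos n 0) by lra.
  destruct (Rle_or_lt x 0) as [Hneg | Hpos].
  { rewrite flat_nonpos by lra; replace ((0 - 0) / x - 0) with 0 by (field; lra).
    rewrite Rabs_R0; exact Heps. }
  rewrite Rabs_pos_eq in Hx by lra.
  unfold flat; destruct (Rlt_dec 0 x) as [_ | ]; [| lra].
  assert (Hinv : 0 <= (/ x) ^ S n) by (apply pow_le; left; apply Rinv_0_lt_compat, Hpos).
  replace ((exp (- / x) * (/ x) ^ n - 0) / x - 0) with (exp (- / x) * (/ x) ^ S n)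
    by (simpl; field; lra).
  rewrite Rabs_pos_eq by (apply Rmult_le_pos; [left; apply exp_pos | exact Hinv]).
  apply Rle_lt_trans with ((M * x) ^ S (S n) * (/ x) ^ S n).
  { apply Rmult_le_compat_r; [exact Hinv | apply exp_neg_inv_le, Hpos]. }
  replace ((M * x) ^ S (S n) * (/ x) ^ S n) with (M ^ S (S n) * x).
  2: { rewrite Rpow_mult_distr, pow_inv; simpl pow; field.
       split; [apply pow_nonzero |]; lra. }
  apply Rlt_le_trans with (M ^ S (S n) * (eps / M ^ S (S n)));
    [apply Rmult_lt_compat_l; [exact HM | exact Hx] | right; field; lra].
Qed.

Lemma flat_derive n t : is_derive (flat n) t (flat (S (S n)) t - INR n * flat (S n) t).
Proof.
  destruct (Rtotal_order t 0) as [Hneg | [-> | Hpos]].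
  - rewrite !flat_nonpos by lra; replace (0 - INR n * 0) with 0 by ring.
    apply (is_derive_ext_loc (fun _ => 0)); [| exact (is_derive_const 0 t)].
    apply (filter_imp (fun x => x < 0)); [| exact (open_lt 0 t Hneg)].
    intros x Hx; symmetry; apply flat_nonpos; lra.
  - rewrite !flat_nonpos by lra; replace (0 - INR n * 0) with 0 by ring.
    apply flat_derive_0.
  - apply (is_derive_ext_loc (fun x => exp (- / x) * (/ x) ^ n)).
    { apply (filter_imp (fun x => 0 < x)); [| exact (open_gt 0 t Hpos)].
      intros x Hx; unfold flat; destruct (Rlt_dec 0 x); [reflexivity | lra]. }
    unfold flat; destruct (Rlt_dec 0 t); [| lra].
    auto_derive; [lra |].
    destruct n as [|n]; [simpl; field; lra |].
    rewrite S_INR; simpl pred; simpl pow; field; lra.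
Qed.

Lemma smooth_flat n : smooth (flat n).
Proof.
  intros k; revert n; induction k as [|k IH]; intros n; [exact I |].
  apply (Cn_S_intro k _ _ (flat_derive n)).
  apply Cn_plus; [apply IH | apply Cn_opp, Cn_mult; [apply Cn_const | apply IH]].
Qed.

Lemma Derive_flat0 t : Derive (flat 0) t = flat 2 t.
Proof.
  apply is_derive_unique; replace (flat 2 t) with (flat 2 t - INR 0 * flat 1 t) by (simpl; ring).
  apply flat_derive.
Qed.

Definition bump (t : R) : R := flat 0 t * flat 0 (1 - t).

Lemma smooth_bump : smooth bump.
Proof.
  apply smooth_mult; [apply smooth_flat |].
  apply (smooth_comp (flat 0) (fun t => 1 - t)); [apply smooth_flat |].
  apply smooth_plus; [apply smooth_const | apply smooth_opp, smooth_id].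
Qed.

Lemma Derive_bump t :
  Derive bump t = flat 2 t * flat 0 (1 - t) - flat 0 t * flat 2 (1 - t).
Proof.
  assert (Hex : forall x, ex_derive (flat 0) x) by (intros; apply smooth_ex_derive, smooth_flat).
  apply is_derive_unique; unfold bump; auto_derive; [repeat split; apply Hex |].
  change (Derive (fun x => flat 0 x)) with (Derive (flat 0)).
  rewrite !Derive_flat0; replace (1 + - t) with (1 - t) by ring; ring.
Qed.

Lemma bump_out t : t <= 0 \/ 1 <= t -> bump t = 0.
Proof.
  unfold bump; intros [Ht | Ht]; [rewrite (flat_nonpos 0 t) | rewrite (flat_nonpos 0 (1 - t))];
    lra || ring.
Qed.

Lemma Derive_bump_out t : t <= 0 \/ 1 <= t -> Derive bump t = 0.
Proof.
  rewrite Derive_bump; intros [Ht | Ht];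
    [rewrite !(flat_nonpos _ t) | rewrite !(flat_nonpos _ (1 - t))]; lra || ring.
Qed.

(* On [(0, 1)], [bump' = bump * (1/t^2 - 1/(1-t)^2)]. *)
Lemma Derive_bump_neq0 t : 0 < t < 1 -> t <> 1 / 2 -> Derive bump t <> 0.
Proof.
  intros Ht Hhalf; rewrite Derive_bump, !flat2_eq by lra.
  assert (Hp : 0 < flat 0 t * flat 0 (1 - t)) by (apply Rmult_lt_0_compat; apply flat_pos; lra).
  intros E.
  assert (K : flat 0 t * flat 0 (1 - t) * (1 - 2 * t) = 0).
  { replace (1 - 2 * t) with ((1 - t) * (1 - t) - t * t) by ring.
    rewrite <- (Rmult_0_l (t * t * ((1 - t) * (1 - t)))), <- E; field; lra. }
  apply Rmult_integral in K; lra.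
Qed.

Lemma Derive_bump_shift c t : Derive (fun x => bump (x + c)) t = Derive bump (t + c).
Proof.
  apply is_derive_unique; auto_derive; [apply smooth_ex_derive, smooth_bump | eta_Derive; ring].
Qed.

Ltac bump_simpl :=
  repeat match goal with
  | |- context [Derive bump ?x] => rewrite (Derive_bump_out x) by ((left; lra) || (right; lra))
  | |- context [bump ?x] => rewrite (bump_out x) by ((left; lra) || (right; lra))
  end.

Definition primitive (T : nat -> R -> R) : curve := fun k x => RInt (T k) 0 x.

Lemma smooth_continuous f t : smooth f -> continuous f t.
Proof.
  intros Hf; apply (@ex_derive_continuous R_AbsRing R_NormedModule), smooth_ex_derive, Hf.
Qed.

Lemma is_derive_primitive T k t : smooth (T k) -> is_derive (primitive T k) t (T k t).
Proof.
  intros HT; apply (is_derive_RInt (T k) _ 0); [| apply smooth_continuous, HT].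
  apply filter_forall; intros x; apply (@RInt_correct R_CompleteNormedModule).
  apply (@ex_RInt_continuous R_CompleteNormedModule); intros; apply smooth_continuous, HT.
Qed.

Lemma Derive_primitive T k t : smooth (T k) -> Derive (primitive T k) t = T k t.
Proof. intros HT; apply is_derive_unique, is_derive_primitive, HT. Qed.

Lemma smooth_primitive T k : smooth (T k) -> smooth (primitive T k).
Proof.
  intros HT [|n]; [exact I |].
  apply (Cn_S_intro n _ (T k)); [intros t; apply is_derive_primitive, HT | apply HT].
Qed.

Lemma in_I_R t : in_I m_infty p_infty t.
Proof. split; exact I. Qed.

Lemma unit_speed_primitive T :
  (forall k, smooth (T k)) -> (forall t, sum4 (fun k => T k t ^ 2) = 1) ->
  unit_speed_curve m_infty p_infty (primitive T).
Proof.
  intros HT Hunit; split.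
  - intros k _; apply smooth_smooth_on, smooth_primitive, HT.
  - intros t _; rewrite <- (Hunit t); unfold sum4; rewrite !Derive_primitive; auto.
Qed.

Lemma continuous_eventually_zero (F : (R -> Prop) -> Prop) {FF : ProperFilter F} f t0 :
  filter_le F (locally t0) -> continuous f t0 -> F (fun t => f t = 0) -> f t0 = 0.
Proof.
  intros HF Hf Hzero.
  apply (filterlim_locally_unique (F := F) f (f t0) 0).
  - apply (filterlim_filter_le_1 f HF Hf).
  - apply (filterlim_ext_loc (fun _ => 0)); [| apply filterlim_const].
    apply (filter_imp _ _ (fun t H => eq_sym H) Hzero).
Qed.

Lemma continuous_zero_from_left f t0 d :
  0 < d -> continuous f t0 -> (forall t, t0 - d < t < t0 -> f t = 0) -> f t0 = 0.
Proof.
  intros Hd Hf Hzero; apply (continuous_eventually_zero (at_left t0)); auto.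
  - apply filter_le_within.
  - exists (mkposreal d Hd); intros t Ht Hlt; apply Hzero.
    apply Rabs_lt_between' in Ht; simpl in Ht; lra.
Qed.

Lemma continuous_zero_from_right f t0 d :
  0 < d -> continuous f t0 -> (forall t, t0 < t < t0 + d -> f t = 0) -> f t0 = 0.
Proof.
  intros Hd Hf Hzero; apply (continuous_eventually_zero (at_right t0)); auto.
  - apply filter_le_within.
  - exists (mkposreal d Hd); intros t Ht Hlt; apply Hzero.
    apply Rabs_lt_between' in Ht; simpl in Ht; lra.
Qed.

Lemma eq_of_Derive_zero f a b :
  a < b -> (forall x, ex_derive f x) -> (forall x, a <= x <= b -> Derive f x = 0) -> f a = f b.
Proof.
  intros Hab Hf Hzero.
  destruct (MVT_gen f a b (Derive f)) as [c [Hc E]].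
  - intros x _; apply Derive_correct, Hf.
  - intros x _; apply continuity_pt_filterlim, (@ex_derive_continuous R_AbsRing R_NormedModule), Hf.
  - rewrite Rmin_left, Rmax_right in Hc by lra; rewrite Hzero in E by lra; lra.
Qed.

Lemma plane_normal_zero c s d w0 w :
  c ^ 2 + s ^ 2 = 1 -> d <> 0 ->
  w0 * c + w * s = 0 -> w0 * (- s * d) + w * (c * d) = 0 -> w = 0.
Proof.
  intros Hcs Hd H1 H2.
  assert (H3 : - w0 * s + w * c = 0).
  { apply (Rmult_eq_reg_r d); [rewrite Rmult_0_l, <- H2; ring | exact Hd]. }
  replace w with (w * (c ^ 2 + s ^ 2)) by (rewrite Hcs; ring).
  replace (w * (c ^ 2 + s ^ 2)) with (s * (w0 * c + w * s) + c * (- w0 * s + w * c)) by ring.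
  rewrite H1, H3; ring.
Qed.

Lemma orthogonal_to_unit_axis (V W : nat -> R) r :
  (r < 4)%nat -> (forall k, (k < 4)%nat -> k <> r -> W k = 0) ->
  sum4 (fun k => W k * W k) = 1 -> sum4 (fun k => V k * W k) = 0 -> V r = 0.
Proof.
  intros Hr Hz Hunit Horth; unfold sum4 in Hunit, Horth.
  destruct r as [|[|[|[|r]]]]; try lia;
    rewrite ?(Hz 0%nat), ?(Hz 1%nat), ?(Hz 2%nat), ?(Hz 3%nat) in Hunit, Horth by lia; nra.
Qed.

Section Tangent.

Variable th : nat -> R -> R.
Hypothesis smooth_th : forall m, smooth (th m).

(* The unit vector obtained from [e0] by rotating through [th m] in each plane
   [(e0, e_m)], [m = 1, 2, 3], as long as at most one angle is nonzero. *)
Definition tangent (k : nat) (t : R) : R :=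
  match k with
  | O => cos (th 1 t) + cos (th 2 t) + cos (th 3 t) - 2
  | _ => sin (th k t)
  end.

Definition osc_normal (t : R) (W : nat -> R) : Prop :=
  sum4 (fun k => W k * tangent k t) = 0 /\
  sum4 (fun k => W k * Derive (tangent k) t) = 0.

Definition rotating_in (m : nat) (t : R) : Prop :=
  (1 <= m <= 3)%nat /\
  (forall j, (1 <= j <= 3)%nat -> j <> m -> th j t = 0 /\ Derive (th j) t = 0) /\
  Derive (th m) t <> 0.

Lemma smooth_tangent k : smooth (tangent k).
Proof.
  destruct k as [|k]; [| apply (smooth_comp sin), smooth_th; apply smooth_sin].
  apply smooth_plus; [| apply smooth_const].
  repeat apply smooth_plus; apply (smooth_comp cos); auto using smooth_cos.
Qed.

Lemma tangent_unit m t :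
  (1 <= m <= 3)%nat -> (forall j, (1 <= j <= 3)%nat -> j <> m -> th j t = 0) ->
  sum4 (fun k => tangent k t ^ 2) = 1.
Proof.
  intros Hm H0; pose proof (sin2_cos2 (th m t)) as Hsc; unfold Rsqr in Hsc.
  unfold sum4, tangent.
  destruct m as [|[|[|[|m]]]]; try lia;
    rewrite ?(H0 1%nat), ?(H0 2%nat), ?(H0 3%nat), ?sin_0, ?cos_0 by lia; nra.
Qed.

Lemma unit_speed_tangent :
  (forall t, exists m, (1 <= m <= 3)%nat /\ forall j, (1 <= j <= 3)%nat -> j <> m -> th j t = 0) ->
  unit_speed_curve m_infty p_infty (primitive tangent).
Proof.
  intros Hplanar; apply unit_speed_primitive; [exact smooth_tangent |].
  intros t; destruct (Hplanar t) as [m [Hm Hrest]]; exact (tangent_unit m t Hm Hrest).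
Qed.

Lemma tangent_at_rest t (W : nat -> R) :
  th 1 t = 0 -> th 2 t = 0 -> th 3 t = 0 -> sum4 (fun k => W k * tangent k t) = W O.
Proof.
  intros H1 H2 H3; unfold sum4, tangent; rewrite H1, H2, H3, sin_0, cos_0; ring.
Qed.

Lemma Derive_tangent0 t :
  Derive (tangent 0) t =
  - (sin (th 1 t) * Derive (th 1) t + sin (th 2 t) * Derive (th 2) t
     + sin (th 3 t) * Derive (th 3) t).
Proof.
  apply is_derive_unique; unfold tangent; auto_derive;
    [repeat split; apply smooth_ex_derive, smooth_th | eta_Derive; ring].
Qed.

Lemma Derive_tangentS k t : Derive (tangent (S k)) t = cos (th (S k) t) * Derive (th (S k)) t.
Proof.
  apply is_derive_unique; unfold tangent; auto_derive;
    [repeat split; apply smooth_ex_derive, smooth_th | eta_Derive; ring].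
Qed.

Lemma osc_normal_rotating m t W : rotating_in m t -> osc_normal t W -> W m = 0.
Proof.
  intros [Hm [Hrest Hd]] [HT HdT].
  assert (Hz : forall j, (1 <= j <= 3)%nat -> j <> m -> th j t = 0) by apply Hrest.
  assert (Hdz : forall j, (1 <= j <= 3)%nat -> j <> m -> Derive (th j) t = 0) by apply Hrest.
  assert (Hcs : cos (th m t) ^ 2 + sin (th m t) ^ 2 = 1)
    by (pose proof (sin2_cos2 (th m t)) as H; unfold Rsqr in H; nra).
  unfold sum4, tangent in HT; unfold sum4 in HdT.
  rewrite Derive_tangent0, !Derive_tangentS in HdT.
  apply (plane_normal_zero (cos (th m t)) (sin (th m t)) (Derive (th m) t) (W O)); auto;
    destruct m as [|[|[|[|m]]]]; try lia;
    rewrite ?(Hz 1%nat), ?(Hz 2%nat), ?(Hz 3%nat), ?sin_0, ?cos_0 in HT, HdT by lia;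
    rewrite ?(Hdz 1%nat), ?(Hdz 2%nat), ?(Hdz 3%nat) in HdT by lia; lra.
Qed.

Lemma osc_normal_junction (W : nat -> R -> R) t0 d m1 m2 :
  0 < d -> th 1 t0 = 0 -> th 2 t0 = 0 -> th 3 t0 = 0 ->
  (forall k, (k < 4)%nat -> continuous (W k) t0) ->
  (forall t, osc_normal t (fun k => W k t)) ->
  (forall t, t0 - d < t < t0 -> rotating_in m1 t) ->
  (forall t, t0 < t < t0 + d -> rotating_in m2 t) ->
  W O t0 = 0 /\ W m1 t0 = 0 /\ W m2 t0 = 0.
Proof.
  intros Hd H1 H2 H3 Hcont Hnormal Hleft Hright.
  assert (Hm1 : (m1 < 4)%nat) by (destruct (Hleft (t0 - d / 2)) as [Hm _]; [lra | lia]).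
  assert (Hm2 : (m2 < 4)%nat) by (destruct (Hright (t0 + d / 2)) as [Hm _]; [lra | lia]).
  split; [| split].
  - rewrite <- (tangent_at_rest t0 (fun k => W k t0) H1 H2 H3); apply Hnormal.
  - apply (continuous_zero_from_left (W m1) t0 d Hd (Hcont m1 Hm1)).
    intros t Ht; apply (osc_normal_rotating m1 t (fun k => W k t)); auto.
  - apply (continuous_zero_from_right (W m2) t0 d Hd (Hcont m2 Hm2)).
    intros t Ht; apply (osc_normal_rotating m2 t (fun k => W k t)); auto.
Qed.

(* At a switch from the plane [(e0, e_m1)] to [(e0, e_m2)], a unit normal field [W]
   is forced onto the remaining axis [e_r]. *)
Lemma osc_normal_junction_axis (V W : nat -> R -> R) t0 d m1 m2 r :
  0 < d -> (r < 4)%nat -> (forall k, (k < 4)%nat -> k <> r -> k = O \/ k = m1 \/ k = m2) ->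
  th 1 t0 = 0 -> th 2 t0 = 0 -> th 3 t0 = 0 ->
  (forall k, (k < 4)%nat -> continuous (W k) t0) ->
  (forall t, osc_normal t (fun k => W k t)) ->
  (forall t, t0 - d < t < t0 -> rotating_in m1 t) ->
  (forall t, t0 < t < t0 + d -> rotating_in m2 t) ->
  sum4 (fun k => W k t0 * W k t0) = 1 -> sum4 (fun k => V k t0 * W k t0) = 0 ->
  V r t0 = 0.
Proof.
  intros Hd Hr Hcover H1 H2 H3 Hcont Hnormal Hleft Hright Hunit Horth.
  destruct (osc_normal_junction W t0 d m1 m2) as [W0 [Wm1 Wm2]]; auto.
  apply (orthogonal_to_unit_axis (fun k => V k t0) (fun k => W k t0) r Hr); auto.
  intros k Hk Hkr; destruct (Hcover k Hk Hkr) as [-> | [-> | ->]]; assumption.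
Qed.

End Tangent.

Ltac prove_rotating rewrite_Derive :=
  split; [lia | split];
  [ intros j Hj Hjm; destruct j as [|[|[|[|j]]]]; try lia; rewrite_Derive; cbn -[bump];
    bump_simpl; split; ring
  | rewrite_Derive; cbn -[bump]; bump_simpl; rewrite ?Rplus_0_l, ?Rplus_0_r;
    apply Derive_bump_neq0; lra ].

Ltac prove_at_rest := split; [lia |]; intros j Hj Hjm; destruct j as [|[|[|[|j]]]]; try lia;
  cbn -[bump]; bump_simpl; ring.

Lemma perm123_lt4 p i : perm123 p -> (i <= 3)%nat -> (p i < 4)%nat.
Proof.
  intros [H0 [Hrange _]] Hi; destruct i as [|i]; [rewrite H0; lia |].
  specialize (Hrange (S i)); lia.
Qed.

Lemma perm123_eqb p i j :
  perm123 p -> (i <= 3)%nat -> (j <= 3)%nat -> Nat.eqb (p i) (p j) = Nat.eqb i j.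
Proof.
  intros [_ [_ Hinj]] Hi Hj; destruct (Nat.eqb_spec i j) as [-> | Hne]; [apply Nat.eqb_refl |].
  apply Nat.eqb_neq; intros E; apply Hne, Hinj; auto.
Qed.

Section Frame.

Variables (a b : Rbar) (gamma : curve) (Z : frame_map) (p : nat -> nat).
Hypotheses (HZ : is_frame a b gamma Z) (Hp : perm123 p).

Lemma frame_perm_orthonormal t i j :
  in_I a b t -> (i <= 3)%nat -> (j <= 3)%nat ->
  sum4 (fun k => Z (p i) k t * Z (p j) k t) = if Nat.eqb i j then 1 else 0.
Proof.
  intros Ht Hi Hj; rewrite <- (perm123_eqb p i j Hp Hi Hj).
  apply HZ; auto; apply perm123_lt4; auto.
Qed.

Lemma frame_perm_ex_derive i k t :
  in_I a b t -> (i <= 3)%nat -> (k < 4)%nat -> ex_derive (Z (p i) k) t.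
Proof.
  intros Ht Hi Hk; apply (proj1 HZ (p i) k (perm123_lt4 p i Hp Hi) Hk 1%nat t Ht).
Qed.

Lemma frame_perm_continuous i k t :
  in_I a b t -> (i <= 3)%nat -> (k < 4)%nat -> continuous (Z (p i) k) t.
Proof.
  intros Ht Hi Hk; apply (@ex_derive_continuous R_AbsRing R_NormedModule).
  apply frame_perm_ex_derive; auto.
Qed.

Lemma frame_perm_coefficient (X : nat -> R) t i j :
  in_I a b t -> (i <= 3)%nat -> (j <= 3)%nat ->
  (forall k, (k < 4)%nat -> Derive (Z (p j) k) t = sum4 (fun l => X l * Z (p l) k t)) ->
  sum4 (fun k => Z (p i) k t * Derive (Z (p j) k) t) = X i.
Proof.
  intros Ht Hi Hj HX; unfold sum4 at 1; rewrite !HX by lia.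
  transitivity (sum4 (fun l => X l * sum4 (fun k => Z (p i) k t * Z (p l) k t))).
  { unfold sum4; ring. }
  unfold sum4 at 1; rewrite !(frame_perm_orthonormal t i) by (auto || lia).
  destruct i as [|[|[|[|i]]]]; try lia; simpl; ring.
Qed.

End Frame.

Lemma frame_tangent T Z k t :
  (forall k, smooth (T k)) -> is_frame m_infty p_infty (primitive T) Z -> (k < 4)%nat ->
  Z O k t = T k t.
Proof.
  intros HT [_ [_ Hfirst]] Hk; rewrite (Hfirst t (in_I_R t) k Hk); apply Derive_primitive, HT.
Qed.

Lemma frame_osc_normal th Z p (X : nat -> R) i t :
  (forall m, smooth (th m)) -> is_frame m_infty p_infty (primitive (tangent th)) Z ->
  perm123 p -> (1 <= i <= 3)%nat ->
  (forall k, (k < 4)%nat -> Derive (Z (p O) k) t = sum4 (fun l => X l * Z (p l) k t)) ->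
  X i = 0 -> osc_normal th t (fun k => Z (p i) k t).
Proof.
  intros Hth HZ Hp Hi HX HXi.
  assert (Hp0 : p O = O) by apply (proj1 Hp).
  assert (HT : forall k, smooth (tangent th k)) by (intros; apply smooth_tangent, Hth).
  assert (Hrow0 : forall k x, (k < 4)%nat -> Z (p O) k x = tangent th k x)
    by (intros; rewrite Hp0; apply frame_tangent; auto).
  split.
  - transitivity (sum4 (fun k => Z (p i) k t * Z (p O) k t)).
    { unfold sum4; rewrite !Hrow0 by lia; reflexivity. }
    rewrite (frame_perm_orthonormal _ _ _ Z p HZ Hp t i O (in_I_R t)) by lia.
    destruct i as [|[|[|[|i]]]]; try lia; reflexivity.
  - transitivity (sum4 (fun k => Z (p i) k t * Derive (Z (p O) k) t)).
    { unfold sum4; rewrite !(Derive_ext (Z (p O) _) (tangent th _)) by (intros; apply Hrow0; lia).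
      reflexivity. }
    rewrite <- HXi; apply (frame_perm_coefficient _ _ _ Z p HZ Hp X t i O (in_I_R t)); auto; lia.
Qed.

Lemma frame_perm_at_rest (th : nat -> R -> R) Z p i t :
  (forall m, smooth (th m)) -> is_frame m_infty p_infty (primitive (tangent th)) Z ->
  perm123 p -> (1 <= i <= 3)%nat -> th 1%nat t = 0 -> th 2%nat t = 0 -> th 3%nat t = 0 ->
  Z (p i) O t = 0.
Proof.
  intros Hth HZ Hp Hi H1 H2 H3.
  rewrite <- (tangent_at_rest th t (fun k => Z (p i) k t) H1 H2 H3).
  transitivity (sum4 (fun k => Z (p i) k t * Z (p O) k t)).
  - unfold sum4; rewrite (proj1 Hp), !(frame_tangent (tangent th)) by auto using smooth_tangent.
    reflexivity.
  - rewrite (frame_perm_orthonormal _ _ _ Z p HZ Hp t i O (in_I_R t)) by lia.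
    destruct i as [|[|[|[|i]]]]; try lia; reflexivity.
Qed.

Lemma type_C_frame_structure (th : nat -> R -> R) (Z : frame_map) (p : nat -> nat)
    (x1 x2 x3 : R -> R) :
  (forall m, smooth (th m)) -> is_frame m_infty p_infty (primitive (tangent th)) Z ->
  perm123 p ->
  (forall t, in_I m_infty p_infty t -> forall i k, (i < 4)%nat -> (k < 4)%nat ->
     Derive (Z (p i) k) t = sum4 (fun j => matC (x1 t) (x2 t) (x3 t) i j * Z (p j) k t)) ->
  (forall t, osc_normal th t (fun k => Z (p 3%nat) k t)) /\
  (forall k a b, (k < 4)%nat -> a < b -> (forall x, a <= x <= b -> tangent th k x = 0) ->
     Z (p 2%nat) k a = Z (p 2%nat) k b).
Proof.
  intros Hth HZ Hp Heq; split.
  - intros t; apply (frame_osc_normal th Z p (fun l => matC (x1 t) (x2 t) (x3 t) O l));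
      [exact Hth | exact HZ | exact Hp | lia | | reflexivity].
    intros k Hk; apply Heq; auto using in_I_R; lia.
  - intros k a b Hk Hab Hzero; apply eq_of_Derive_zero; [exact Hab | |].
    + intros x; apply (frame_perm_ex_derive _ _ _ Z p HZ Hp); auto using in_I_R; lia.
    + intros x Hx; rewrite Heq by (auto using in_I_R; lia); unfold sum4, matC.
      rewrite (proj1 Hp), (frame_tangent (tangent th)), Hzero by auto using smooth_tangent; ring.
Qed.

Definition angles_i (m : nat) (t : R) : R :=
  match m with 1%nat => bump (t + 1) | 2%nat => bump t | _ => 0 end.

Lemma smooth_angles_i m : smooth (angles_i m).
Proof.
  destruct m as [|[|[|m]]]; unfold angles_i;
    [apply smooth_const | apply smooth_shift, smooth_bump | apply smooth_bump | apply smooth_const].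
Qed.

Lemma Derive_angles_i1 t : Derive (angles_i 1) t = Derive bump (t + 1).
Proof. apply Derive_bump_shift. Qed.

Lemma Derive_angles_i2 t : Derive (angles_i 2) t = Derive bump t.
Proof. reflexivity. Qed.

Lemma Derive_angles_i3 t : Derive (angles_i 3) t = 0.
Proof. exact (Derive_const 0 t). Qed.

Lemma angles_i_rotating_1 t : -1/2 < t < 0 -> rotating_in angles_i 1 t.
Proof.
  intros Ht; prove_rotating ltac:(rewrite ?Derive_angles_i1, ?Derive_angles_i2, ?Derive_angles_i3).
Qed.

Lemma angles_i_rotating_2 t : 0 < t < 1/2 -> rotating_in angles_i 2 t.
Proof.
  intros Ht; prove_rotating ltac:(rewrite ?Derive_angles_i1, ?Derive_angles_i2, ?Derive_angles_i3).
Qed.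

Definition frame_i (i k : nat) (t : R) : R :=
  match i, k with
  | O, _ => tangent angles_i k t
  | 1%nat, O => - sin (angles_i 1 t)
  | 1%nat, 1%nat => cos (angles_i 1 t)
  | 2%nat, O => - sin (angles_i 2 t)
  | 2%nat, 2%nat => cos (angles_i 2 t)
  | 3%nat, 3%nat => 1
  | _, _ => 0
  end.

Lemma smooth_frame_i i k : smooth (frame_i i k).
Proof.
  assert (Hcos : forall m, smooth (fun t => cos (angles_i m t)))
    by (intros; apply (smooth_comp cos); [apply smooth_cos | apply smooth_angles_i]).
  assert (Hsin : forall m, smooth (fun t => - sin (angles_i m t)))
    by (intros; apply smooth_opp, (smooth_comp sin); [apply smooth_sin | apply smooth_angles_i]).
  destruct i as [|[|[|[|i]]]]; [apply smooth_tangent, smooth_angles_i | ..];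
    destruct k as [|[|[|[|k]]]]; unfold frame_i; auto; apply smooth_const.
Qed.

Lemma bump_split t :
  (bump t = 0 /\ Derive bump t = 0) \/ (bump (t + 1) = 0 /\ Derive bump (t + 1) = 0).
Proof.
  destruct (Rle_or_lt t 0); [left | right]; bump_simpl; split; reflexivity.
Qed.

Lemma frame_i_is_frame : is_frame m_infty p_infty (primitive (tangent angles_i)) frame_i.
Proof.
  split; [| split].
  - intros i k _ _; apply smooth_smooth_on, smooth_frame_i.
  - intros t _ i j Hi Hj.
    pose proof (sin2_cos2 (angles_i 1 t)) as H1; pose proof (sin2_cos2 (angles_i 2 t)) as H2.
    unfold Rsqr, angles_i in H1, H2.
    destruct (bump_split t) as [[E _] | [E _]];
      destruct i as [|[|[|[|i]]]]; try lia; destruct j as [|[|[|[|j]]]]; try lia;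
      unfold sum4, frame_i, tangent, angles_i; cbn [Nat.eqb];
      rewrite ?E, ?sin_0, ?cos_0 in *; nra.
  - intros t _ k Hk; rewrite Derive_primitive by apply smooth_tangent, smooth_angles_i.
    destruct k as [|[|[|[|k]]]]; try lia; reflexivity.
Qed.

Lemma perm123_id : perm123 (fun i => i).
Proof. split; [reflexivity | split]; auto. Qed.

Lemma frame_i_type_C : frame_of_type matC m_infty p_infty frame_i.
Proof.
  exists (fun i => i); split; [exact perm123_id |].
  exists (fun t => Derive bump (t + 1)), (Derive bump), (fun _ => 0).
  split; [apply smooth_smooth_on, (smooth_shift (Derive bump)), smooth_Derive, smooth_bump |].
  split; [apply smooth_smooth_on, smooth_Derive, smooth_bump |].
  split; [apply smooth_smooth_on, smooth_const |].
  intros t _ i k Hi Hk.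
  assert (Hex : forall x, ex_derive bump x) by (intros; apply smooth_ex_derive, smooth_bump).
  apply is_derive_unique.
  destruct (bump_split t) as [[E D] | [E D]];
    destruct i as [|[|[|[|i]]]]; try lia; destruct k as [|[|[|[|k]]]]; try lia;
    unfold sum4, matC, frame_i, tangent, angles_i; cbn -[sin cos];
    auto_derive; try solve [repeat split; apply Hex]; eta_Derive;
    rewrite ?E, ?D, ?sin_0, ?cos_0; ring.
Qed.

Lemma curve_i_not_type_D : ~ admits_frame_of_type matD m_infty p_infty (primitive (tangent angles_i)).
Proof.
  intros [Z [HZ [p [Hp [x1 [x2 [x3 [_ [_ [_ Heq]]]]]]]]]].
  assert (Hnormal : forall i t, (i = 2 \/ i = 3)%nat -> osc_normal angles_i t (fun k => Z (p i) k t)).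
  { intros i t Hi.
    apply (frame_osc_normal angles_i Z p (fun l => matD (x1 t) (x2 t) (x3 t) O l));
      [apply smooth_angles_i | exact HZ | exact Hp | lia | |].
    - intros k Hk; apply Heq; auto using in_I_R; lia.
    - destruct Hi as [-> | ->]; reflexivity. }
  assert (Hzero : forall i, (i = 2 \/ i = 3)%nat ->
            Z (p i) O 0 = 0 /\ Z (p i) 1%nat 0 = 0 /\ Z (p i) 2%nat 0 = 0).
  { intros i Hi.
    apply (osc_normal_junction angles_i smooth_angles_i (fun k t => Z (p i) k t) 0 (1/2));
      [lra | cbn; bump_simpl; reflexivity .. | | auto | |].
    - intros k Hk; apply (frame_perm_continuous _ _ _ Z p HZ Hp); auto using in_I_R; lia.
    - intros t Ht; apply angles_i_rotating_1; lra.
    - intros t Ht; apply angles_i_rotating_2; lra. }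
  destruct (Hzero 2%nat) as [A0 [A1 A2]]; [lia |].
  destruct (Hzero 3%nat) as [B0 [B1 B2]]; [lia |].
  pose proof (frame_perm_orthonormal _ _ _ Z p HZ Hp 0 2 2 (in_I_R 0) ltac:(lia) ltac:(lia)) as N22.
  pose proof (frame_perm_orthonormal _ _ _ Z p HZ Hp 0 3 3 (in_I_R 0) ltac:(lia) ltac:(lia)) as N33.
  pose proof (frame_perm_orthonormal _ _ _ Z p HZ Hp 0 2 3 (in_I_R 0) ltac:(lia) ltac:(lia)) as N23.
  unfold sum4 in N22, N33, N23; cbn [Nat.eqb] in N22, N33, N23.
  rewrite A0, A1, A2, B0, B1, B2 in *; nra.
Qed.

Lemma curve_i_unit_speed : unit_speed_curve m_infty p_infty (primitive (tangent angles_i)).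
Proof.
  apply unit_speed_tangent; [exact smooth_angles_i | intros t].
  destruct (Rle_or_lt t 0); [exists 1%nat | exists 2%nat]; prove_at_rest.
Qed.

Definition angles_ii (m : nat) (t : R) : R :=
  match m with
  | 1%nat => bump (t + 1) + bump (t - 2)
  | 2%nat => bump t
  | _ => bump (t - 1)
  end.

Lemma smooth_angles_ii m : smooth (angles_ii m).
Proof.
  destruct m as [|[|[|m]]]; unfold angles_ii;
    repeat first [apply smooth_plus | apply smooth_shift | apply smooth_bump].
Qed.

Lemma Derive_angles_ii1 t : Derive (angles_ii 1) t = Derive bump (t + 1) + Derive bump (t - 2).
Proof.
  apply is_derive_unique; unfold angles_ii; auto_derive;
    [repeat split; apply smooth_ex_derive, smooth_bump | eta_Derive; unfold Rminus; ring].
Qed.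

Lemma Derive_angles_ii2 t : Derive (angles_ii 2) t = Derive bump t.
Proof. reflexivity. Qed.

Lemma Derive_angles_ii3 t : Derive (angles_ii 3) t = Derive bump (t - 1).
Proof.
  apply is_derive_unique; unfold angles_ii; auto_derive;
    [apply smooth_ex_derive, smooth_bump | eta_Derive; unfold Rminus; ring].
Qed.

Ltac rewrite_Derive_angles_ii :=
  rewrite ?Derive_angles_ii1, ?Derive_angles_ii2, ?Derive_angles_ii3.

Lemma angles_ii_rotating_1 t : -1/2 < t < 0 \/ 2 < t < 5/2 -> rotating_in angles_ii 1 t.
Proof. intros [Ht | Ht]; prove_rotating ltac:(rewrite_Derive_angles_ii). Qed.

Lemma angles_ii_rotating_2 t : 0 < t < 1 -> t <> 1/2 -> rotating_in angles_ii 2 t.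
Proof. intros Ht Hhalf; prove_rotating ltac:(rewrite_Derive_angles_ii). Qed.

Lemma angles_ii_rotating_3 t : 1 < t < 2 -> t <> 3/2 -> rotating_in angles_ii 3 t.
Proof. intros Ht Hhalf; prove_rotating ltac:(rewrite_Derive_angles_ii). Qed.

Lemma curve_ii_not_type_C :
  ~ admits_frame_of_type matC m_infty p_infty (primitive (tangent angles_ii)).
Proof.
  intros [Z [HZ [p [Hp [x1 [x2 [x3 [_ [_ [_ Heq]]]]]]]]]].
  destruct (type_C_frame_structure angles_ii Z p x1 x2 x3 smooth_angles_ii HZ Hp Heq)
    as [Hnormal Hconst].
  assert (Hortho : forall t i j, (i <= 3)%nat -> (j <= 3)%nat ->
            sum4 (fun k => Z (p i) k t * Z (p j) k t) = if Nat.eqb i j then 1 else 0)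
    by (intros; apply (frame_perm_orthonormal _ _ _ Z p HZ Hp); auto using in_I_R).
  assert (Hjunction : forall t0 m1 m2 r, (r < 4)%nat ->
            (forall k, (k < 4)%nat -> k <> r -> k = O \/ k = m1 \/ k = m2) ->
            angles_ii 1 t0 = 0 -> angles_ii 2 t0 = 0 -> angles_ii 3 t0 = 0 ->
            (forall t, t0 - 1/2 < t < t0 -> rotating_in angles_ii m1 t) ->
            (forall t, t0 < t < t0 + 1/2 -> rotating_in angles_ii m2 t) ->
            Z (p 2%nat) r t0 = 0).
  { intros t0 m1 m2 r Hr Hcover H1 H2 H3 Hleft Hright.
    apply (osc_normal_junction_axis angles_ii smooth_angles_ii
             (fun k t => Z (p 2%nat) k t) (fun k t => Z (p 3%nat) k t) t0 (1/2) m1 m2 r);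
      auto; [lra |].
    intros k Hk; apply (frame_perm_continuous _ _ _ Z p HZ Hp); auto using in_I_R; lia. }
  assert (W0 : Z (p 2%nat) O 1 = 0)
    by (apply (frame_perm_at_rest angles_ii); auto using smooth_angles_ii; try lia;
        cbn; bump_simpl; ring).
  assert (W1 : Z (p 2%nat) 1%nat 1 = 0).
  { apply (Hjunction 1 2%nat 3%nat); [lia | lia | cbn; bump_simpl; ring .. | |].
    - intros t Ht; apply angles_ii_rotating_2; lra.
    - intros t Ht; apply angles_ii_rotating_3; lra. }
  assert (W2 : Z (p 2%nat) 2%nat 1 = 0).
  { rewrite (Hconst 2%nat 1 2); [| lia | lra | intros x Hx; cbn; bump_simpl; apply sin_0].
    apply (Hjunction 2 3%nat 1%nat); [lia | lia | cbn; bump_simpl; ring .. | |].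
    - intros t Ht; apply angles_ii_rotating_3; lra.
    - intros t Ht; apply angles_ii_rotating_1; lra. }
  assert (W3 : Z (p 2%nat) 3%nat 1 = 0).
  { rewrite <- (Hconst 3%nat 0 1); [| lia | lra | intros x Hx; cbn; bump_simpl; apply sin_0].
    apply (Hjunction 0 1%nat 2%nat); [lia | lia | cbn; bump_simpl; ring .. | |].
    - intros t Ht; apply angles_ii_rotating_1; lra.
    - intros t Ht; apply angles_ii_rotating_2; lra. }
  pose proof (Hortho 1 2%nat 2%nat ltac:(lia) ltac:(lia)) as Hunit.
  unfold sum4 in Hunit; cbn [Nat.eqb] in Hunit; rewrite W0, W1, W2, W3 in Hunit; lra.
Qed.

Lemma curve_ii_unit_speed : unit_speed_curve m_infty p_infty (primitive (tangent angles_ii)).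
Proof.
  apply unit_speed_tangent; [exact smooth_angles_ii | intros t].
  destruct (Rle_or_lt t 0); [exists 1%nat; prove_at_rest |].
  destruct (Rle_or_lt t 1); [exists 2%nat; prove_at_rest |].
  destruct (Rle_or_lt t 2); [exists 3%nat | exists 1%nat]; prove_at_rest.
Qed.

Theorem theorem1 :
  (exists (a b : Rbar) (gamma : curve),
     Rbar_lt a b /\ unit_speed_curve a b gamma /\
     admits_frame_of_type matC a b gamma /\
     ~ admits_frame_of_type matD a b gamma) /\
  (exists (a b : Rbar) (gamma : curve),
     Rbar_lt a b /\ unit_speed_curve a b gamma /\
     ~ admits_frame_of_type matC a b gamma).
Proof.
  split.
  - exists m_infty, p_infty, (primitive (tangent angles_i)).
    split; [exact I | split; [exact curve_i_unit_speed | split]].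
    + exists frame_i; split; [exact frame_i_is_frame | exact frame_i_type_C].
    + exact curve_i_not_type_D.
  - exists m_infty, p_infty, (primitive (tangent angles_ii)).
    split; [exact I | split; [exact curve_ii_unit_speed | exact curve_ii_not_type_C]].
Qed.
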